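(* Let $(G,g)$ be a six-dimensional semi-Riemannian Lie group with a subgroup $K\cong\mathrm{SU}(2)\times\mathrm{SO}(2)$, and let $\mathcal F$ be the left-invariant foliation generated by $K$, with tangent distribution $\mathcal V$. Let $\{A,B,C,T,X,Y\}$ be an orthonormal basis of the Lie algebra $\mathfrak g$ of $G$ such that $A,B,C$ span $\mathfrak{su}(2)$ with $[A,B]=2C$, $[C,A]=2B$, $[B,C]=2A$, $T$ spans $\mathfrak{so}(2)$ (so $X,Y$ span the orthogonal complement of $\mathfrak{su}(2)\times\mathfrak{so}(2)$), and suppose the remaining brackets have the form $[E,X]=e_{11}A+e_{12}B+e_{13}C+e_{14}T$, $[E,Y]=e_{21}A+e_{22}B+e_{23}C+e_{24}T$ for $E\in\{A,B,C\}$, $[T,X]=x_1X+y_1Y+t_{11}A+t_{12}B+t_{13}C+t_{14}T$, $[T,Y]=x_2X+y_2Y+t_{21}A+t_{22}B+t_{23}C+t_{24}T$, $[X,Y]=\rho X+\theta_1A+\theta_2B+\theta_3C+\theta_4T$, with real coefficients. Then $\mathcal F$ is conformal if and only if $$x_1=y_2\quad\text{and}\quad \varepsilon_Xx_2+\varepsilon_Yy_1=0.$$ In that case, $\mathcal F$ is semi-Riemannian if and only if $x_1=y_2=0$.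
   Context: A semi-Riemannian Lie group $(G,g)$ is a Lie group with a left-invariant non-degenerate metric $g$ of arbitrary signature; its Lie algebra is identified with the left-invariant vector fields. $K$ generates the foliation $\mathcal F$ by its left translates; $\mathcal V$ is spanned by the Lie algebra of $K$ and $\mathcal H$ (spanned by $X,Y$) is its orthogonal complement. Orthonormal means $g(E_i,E_j)=\varepsilon_{E_i}\delta_{ij}$ with $\varepsilon_{E_i}=g(E_i,E_i)\in\{\pm1\}$. With $\nabla$ the Levi-Civita connection and $\mathcal V$ also the orthogonal projection, $B^{\mathcal H}(E,F)=\tfrac12\mathcal V(\nabla_EF+\nabla_FE)$ for $E,F\in\mathcal H$. $\mathcal F$ is conformal if there is a vector field $V$ in $\mathcal V$ with $B^{\mathcal H}(E,F)=g(E,F)V$ for all $E,F\in\mathcal H$, and semi-Riemannian if $B^{\mathcal H}=0$. *)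

(* The Lie algebra g of G is modelled as R^6 = 'rV[R]_6 with
   the standard basis e_0..e_5 playing the role of A,B,C,T,X,Y. *)
From HB Require Import structures.
From mathcomp Require Import all_boot all_order all_algebra.
From mathcomp Require Import all_classical all_reals.
Set Implicit Arguments. Unset Strict Implicit. Unset Printing Implicit Defensive.
Import Order.TTheory GRing.Theory Num.Theory.
Local Open Scope ring_scope.

Definition vec (R : realType) := 'rV[R]_6.

Definition bas (R : realType) (i : 'I_6) : vec R := delta_mx 0 i.
Definition iA : 'I_6 := @Ordinal 6 0 isT.
Definition iB : 'I_6 := @Ordinal 6 1 isT.
Definition iC : 'I_6 := @Ordinal 6 2 isT.
Definition iT : 'I_6 := @Ordinal 6 3 isT.
Definition iX : 'I_6 := @Ordinal 6 4 isT.
Definition iY : 'I_6 := @Ordinal 6 5 isT.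

Definition su2 (R : realType) (k : 'I_3) : vec R := bas R (widen_ord (isT : 3 <= 6)%N k).
Definition vcomb (R : realType) (f : 'I_4 -> R) : vec R :=
  \sum_(j < 4) f j *: bas R (widen_ord (isT : 4 <= 6)%N j).

(* left-invariant metric, diagonal of signature eps in the basis: the basis
   is orthonormal, g(E_i,E_j) = eps_i delta_ij *)
Definition gmet (R : realType) (eps : 'I_6 -> R) (u v : vec R) : R :=
  \sum_(i < 6) eps i * u 0 i * v 0 i.

Definition Vproj (R : realType) (u : vec R) : vec R :=
  \row_(i < 6) (if (i < 4)%N then u 0 i else 0).

Definition is_vertical (R : realType) (u : vec R) := Vproj u = u.
Definition is_horizontal (R : realType) (u : vec R) := Vproj u = 0.

(* Levi-Civita connection on left-invariant fields: torsion free and metric *)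
Definition is_levi_civita (R : realType) (eps : 'I_6 -> R)
    (br nabla : vec R -> vec R -> vec R) :=
  (forall u v, nabla u v - nabla v u = br u v) /\
  (forall u v w, gmet eps (nabla u v) w + gmet eps v (nabla u w) = 0).

Definition BH (R : realType) (nabla : vec R -> vec R -> vec R) (E F : vec R) : vec R :=
  2^-1 *: Vproj (nabla E F + nabla F E).

Definition conformal_fol (R : realType) (eps : 'I_6 -> R)
    (nabla : vec R -> vec R -> vec R) :=
  exists V : vec R, is_vertical V /\
    forall E F, is_horizontal E -> is_horizontal F ->
      BH nabla E F = gmet eps E F *: V.

Definition semiriem_fol (R : realType) (nabla : vec R -> vec R -> vec R) :=
  forall E F : vec R, is_horizontal E -> is_horizontal F -> BH nabla E F = 0.

Definition is_lie_bracket (R : realType) (br : vec R -> vec R -> vec R) :=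
  (forall (a : R) u v w, br (a *: u + v) w = a *: br u w + br v w) /\
  (forall u v, br u v = - br v u) /\
  (forall u v w, br u (br v w) + br v (br w u) + br w (br u v) = 0).

From HB Require Import structures.
From mathcomp Require Import all_boot all_order all_algebra.
From mathcomp Require Import all_classical all_reals.
From mathcomp Require Import ring lra.
Set Implicit Arguments. Unset Strict Implicit. Unset Printing Implicit Defensive.
Import Order.TTheory GRing.Theory Num.Theory.
Local Open Scope ring_scope.

(* By the Koszul formula, for a vertical basis vector Z and horizontal E, F,
   g(B^H(E,F), Z) = (g([Z,E],F) + g([Z,F],E)) / 2.  Since ad(su(2)) maps the
   horizontal space into the vertical one, only Z = T contributes, so
   B^H(E,F) is a multiple of T given by the symmetric part of the block
   [[x1, y1], [x2, y2]] of ad_T on span(X,Y).  Conformality says that this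
   symmetric form is proportional to g on span(X,Y), which reads
   x1 = y2 and eps_X x2 + eps_Y y1 = 0; B^H = 0 says moreover that the
   proportionality factor x1 vanishes. *)

Lemma bas_mxE (R : realType) (i j : 'I_6) : bas R i 0 j = (j == i)%:R.
Proof. by rewrite /bas mxE eqxx. Qed.

Lemma bas_su2 (R : realType) (j : 'I_6) (hj : (j < 3)%N) :
  bas R j = su2 R (Ordinal hj).
Proof. by rewrite /su2; congr bas; apply: val_inj. Qed.

Section Metric.
Variables (R : realType) (eps : 'I_6 -> R).

Lemma gmetC (u v : vec R) : gmet eps u v = gmet eps v u.
Proof. by apply: eq_bigr => i _; ring. Qed.

Lemma gmetDl (u v w : vec R) : gmet eps (u + v) w = gmet eps u w + gmet eps v w.
Proof. by rewrite /gmet -big_split /=; apply: eq_bigr => i _; rewrite !mxE; ring. Qed.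

Lemma gmetZl a (u w : vec R) : gmet eps (a *: u) w = a * gmet eps u w.
Proof. by rewrite /gmet mulr_sumr; apply: eq_bigr => i _; rewrite !mxE; ring. Qed.

Lemma gmetNl (u w : vec R) : gmet eps (- u) w = - gmet eps u w.
Proof. by rewrite -scaleN1r gmetZl mulN1r. Qed.

Lemma gmet0l (w : vec R) : gmet eps 0 w = 0.
Proof. by rewrite -(scale0r 0) gmetZl mul0r. Qed.

Lemma gmet_basr (u : vec R) j : gmet eps u (bas R j) = eps j * u 0 j.
Proof.
rewrite /gmet (bigD1 j) //= big1 ?addr0; first by rewrite bas_mxE eqxx mulr1.
by move=> i /negbTE nij; rewrite bas_mxE nij mulr0.
Qed.

Lemma gmet_basl (u : vec R) j : gmet eps (bas R j) u = eps j * u 0 j.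
Proof. by rewrite gmetC gmet_basr. Qed.

Lemma horizontal_coord (F : vec R) (j : 'I_6) :
  is_horizontal F -> (j < 4)%N -> F 0 j = 0.
Proof. by move=> hF hj; have := congr1 (fun M : vec R => M 0 j) hF; rewrite !mxE hj. Qed.

Lemma bas_horizontal (j : 'I_6) : (4 <= j)%N -> is_horizontal (bas R j).
Proof.
move=> hj; apply/rowP => i; rewrite !mxE eqxx.
by case: ifP => // hi; case: eqP => // eij; move: hi; rewrite eij ltnNge hj.
Qed.

Lemma horizontalE (E : vec R) : is_horizontal E ->
  E = E 0 iX *: bas R iX + E 0 iY *: bas R iY.
Proof.
move=> hE; apply/rowP => j; rewrite !mxE eqxx /=.
case: j => [[|[|[|[|[|[|//]]]]]] hj]; rewrite /= ?mulr0 ?mulr1 ?addr0 ?add0r;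
  by [rewrite horizontal_coord | congr (E 0 _); apply: val_inj].
Qed.

Lemma gmet_horizontal (E F : vec R) : is_horizontal F ->
  gmet eps E F = eps iX * E 0 iX * F 0 iX + eps iY * E 0 iY * F 0 iY.
Proof. by move=> hF; rewrite {1}(horizontalE hF) gmetC gmetDl !gmetZl !gmet_basl; ring. Qed.

Lemma gmet_vcomb_horizontal f (F : vec R) :
  is_horizontal F -> gmet eps (vcomb f) F = 0.
Proof.
move=> hF; apply: (big_ind (fun x => gmet eps x F = 0)) => [|x y hx hy|j _].
- exact: gmet0l.
- by rewrite gmetDl hx hy addr0.
- by rewrite gmetZl gmet_basl horizontal_coord ?mulr0 //=.
Qed.

End Metric.

Section LieBracket.
Variables (R : realType) (br : vec R -> vec R -> vec R).
Hypothesis hlie : is_lie_bracket br.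

Lemma lie_br0r (u : vec R) : br u 0 = 0.
Proof.
have [lin [anti _]] := hlie.
have h := lin 1 0 0 u; rewrite scaler0 addr0 scale1r in h.
have br0l : br 0 u = 0 by apply: (@addrI _ (br 0 u)); rewrite addr0 -h.
by rewrite anti br0l oppr0.
Qed.

Lemma lie_br_linearr a (u v w : vec R) : br u (a *: v + w) = a *: br u v + br u w.
Proof.
have [lin [anti _]] := hlie.
by rewrite anti lin (anti v u) (anti w u) scalerN -opprD opprK.
Qed.

Lemma lie_br_horizontal (u E : vec R) : is_horizontal E ->
  br u E = E 0 iX *: br u (bas R iX) + E 0 iY *: br u (bas R iY).
Proof.
move=> hE; rewrite {1}(horizontalE hE) lie_br_linearr.
by rewrite -[E 0 iY *: bas R iY]addr0 lie_br_linearr lie_br0r addr0.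
Qed.

End LieBracket.

Section LeviCivita.
Variables (R : realType) (eps : 'I_6 -> R) (br nabla : vec R -> vec R -> vec R).
Hypothesis hLC : is_levi_civita eps br nabla.

Lemma koszul (u v w : vec R) : 2 * gmet eps (nabla u v) w =
  gmet eps (br u v) w - gmet eps (br v w) u + gmet eps (br w u) v.
Proof.
have [tor met] := hLC.
rewrite -!tor !(gmetDl, gmetNl).
have m1 := met u v w; have m2 := met v u w; have m3 := met w v u.
rewrite [gmet eps v _]gmetC in m1; rewrite [gmet eps u _]gmetC in m2.
rewrite [gmet eps v _]gmetC in m3.
lra.
Qed.

Hypothesis hanti : forall u v, br u v = - br v u.

Lemma BH_vertical_coord (E F : vec R) (i : 'I_6) : eps i != 0 -> (i < 4)%N ->
  BH nabla E F 0 i =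
  (gmet eps (br (bas R i) E) F + gmet eps (br (bas R i) F) E) / (2 * eps i).
Proof.
move=> ei hi; rewrite /BH !mxE hi.
have coord (u : vec R) : u 0 i = gmet eps u (bas R i) / eps i.
  by rewrite gmet_basr mulrAC divff ?mul1r.
have k1 := koszul E F (bas R i); have k2 := koszul F E (bas R i).
rewrite (hanti F E) (hanti F (bas R i)) (hanti E (bas R i)) !gmetNl in k1 k2.
have sum_koszul : gmet eps (nabla E F) (bas R i) + gmet eps (nabla F E) (bas R i)
    = gmet eps (br (bas R i) E) F + gmet eps (br (bas R i) F) E by lra.
by rewrite !coord -mulrDl sum_koszul; field.
Qed.

End LeviCivita.

Section Foliation.
Variables (R : realType) (eps : 'I_6 -> R).
Hypothesis eps_neq0 : forall i, eps i != 0.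
Variables (br : vec R -> vec R -> vec R) (eX eY : 'I_3 -> 'I_4 -> R).
Variables (x1 y1 x2 y2 : R) (t1 t2 : 'I_4 -> R).
Hypothesis hlie : is_lie_bracket br.
Hypothesis hEX : forall k, br (su2 R k) (bas R iX) = vcomb (eX k).
Hypothesis hEY : forall k, br (su2 R k) (bas R iY) = vcomb (eY k).
Hypothesis hTX : br (bas R iT) (bas R iX) = x1 *: bas R iX + y1 *: bas R iY + vcomb t1.
Hypothesis hTY : br (bas R iT) (bas R iY) = x2 *: bas R iX + y2 *: bas R iY + vcomb t2.
Variable nabla : vec R -> vec R -> vec R.
Hypothesis hLC : is_levi_civita eps br nabla.

(* g(B^H(E,F), T) for horizontal E, F, see BH_horizontalE *)
Definition BH_T (E F : vec R) : R :=
  x1 * eps iX * E 0 iX * F 0 iX + y2 * eps iY * E 0 iY * F 0 iY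
  + (eps iX * x2 + eps iY * y1) / 2 * (E 0 iX * F 0 iY + E 0 iY * F 0 iX).

Lemma gmet_ad_su2_horizontal k (E F : vec R) :
  is_horizontal E -> is_horizontal F -> gmet eps (br (su2 R k) E) F = 0.
Proof.
move=> hE hF; rewrite lie_br_horizontal // hEX hEY gmetDl !gmetZl.
by rewrite !gmet_vcomb_horizontal // !mulr0 addr0.
Qed.

Lemma gmet_adT_horizontal (E F : vec R) :
  is_horizontal E -> is_horizontal F -> gmet eps (br (bas R iT) E) F =
  E 0 iX * (x1 * eps iX * F 0 iX + y1 * eps iY * F 0 iY)
  + E 0 iY * (x2 * eps iX * F 0 iX + y2 * eps iY * F 0 iY).
Proof.
move=> hE hF; rewrite lie_br_horizontal // hTX hTY !(gmetDl, gmetZl).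
by rewrite !gmet_vcomb_horizontal // !gmet_basl; ring.
Qed.

Lemma BH_horizontalE (E F : vec R) : is_horizontal E -> is_horizontal F ->
  BH nabla E F = (BH_T E F / eps iT) *: bas R iT.
Proof.
have [_ [hanti _]] := hlie.
move=> hE hF; apply/rowP => j; rewrite [RHS]mxE bas_mxE.
have [hj3 | hj3] := ltnP j 3.
  have njT : j != iT by apply: contraTneq hj3 => ->.
  rewrite (BH_vertical_coord hLC hanti) ?(ltn_trans hj3) // (bas_su2 R hj3).
  by rewrite !gmet_ad_su2_horizontal // (negbTE njT) addr0 !mul0r mulr0.
have [-> | njT] := eqVneq j iT.
  rewrite (BH_vertical_coord hLC hanti) // !gmet_adT_horizontal // mulr1 /BH_T.
  by field; exact: eps_neq0.
have hj4 : (3 < j)%N.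
  rewrite ltn_neqAle hj3 andbT; apply: contra njT => /eqP h3j.
  exact/eqP/val_inj/esym.
by rewrite mulr0 /BH !mxE ltnNge hj4 mulr0.
Qed.

Lemma BH_T_proportional_iff (l : R) :
  (forall E F, is_horizontal E -> is_horizontal F -> BH_T E F = l * gmet eps E F)
  <-> [/\ x1 = l, y2 = l & eps iX * x2 + eps iY * y1 = 0].
Proof.
have hX : is_horizontal (bas R iX) by exact: bas_horizontal.
have hY : is_horizontal (bas R iY) by exact: bas_horizontal.
split => [hl | [hx1 hy2 hs] E F _ hF].
  have := hl _ _ hX hX; have := hl _ _ hY hY; have := hl _ _ hX hY.
  rewrite /BH_T !gmet_basr !bas_mxE /= !(mulr0, mul0r, mulr1, addr0, add0r).
  move=> hs /(mulIf (eps_neq0 iY)) -> /(mulIf (eps_neq0 iX)) ->.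
  by split => //; lra.
by rewrite /BH_T gmet_horizontal // hx1 hy2 hs mul0r; ring.
Qed.

Lemma BH_horizontal_coordT (E F : vec R) : is_horizontal E -> is_horizontal F ->
  BH nabla E F 0 iT = BH_T E F / eps iT.
Proof. by move=> hE hF; rewrite BH_horizontalE // !mxE !eqxx mulr1. Qed.

Lemma conformal_fol_iff :
  conformal_fol eps nabla <-> exists l, forall E F,
    is_horizontal E -> is_horizontal F -> BH_T E F = l * gmet eps E F.
Proof.
split=> [[V [_ hV]] | [l hl]].
  exists (eps iT * V 0 iT) => E F hE hF.
  have := congr1 (fun M : vec R => M 0 iT) (hV E F hE hF).
  rewrite BH_horizontal_coordT // mxE => hT.
  by rewrite -(divfK (eps_neq0 iT) (BH_T E F)) hT; ring.
exists ((l / eps iT) *: bas R iT); split.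
  apply/rowP => j; rewrite !mxE eqxx.
  by case: ifP => //; case: eqP => [-> //|]; rewrite mulr0.
move=> E F hE hF; rewrite BH_horizontalE // scalerA hl //.
by congr (_ *: _); ring.
Qed.

Lemma conformal_iff :
  conformal_fol eps nabla <-> x1 = y2 /\ eps iX * x2 + eps iY * y1 = 0.
Proof.
rewrite conformal_fol_iff.
split=> [[l /BH_T_proportional_iff [-> -> ->]] // | [h12 hs]].
by exists x1; apply/BH_T_proportional_iff.
Qed.

Lemma semiriem_iff :
  semiriem_fol nabla <-> [/\ x1 = 0, y2 = 0 & eps iX * x2 + eps iY * y1 = 0].
Proof.
rewrite -BH_T_proportional_iff.
split=> hBH E F hE hF.
  rewrite mul0r; have := congr1 (fun M : vec R => M 0 iT) (hBH E F hE hF).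
  rewrite BH_horizontal_coordT // mxE => /eqP.
  by rewrite mulf_eq0 invr_eq0 (negbTE (eps_neq0 iT)) orbF => /eqP.
by rewrite BH_horizontalE // hBH // !mul0r scale0r.
Qed.

End Foliation.

Theorem lemma8p1 (R : realType) (eps : 'I_6 -> R)
  (heps : forall i, eps i = 1 \/ eps i = -1)
  (br : vec R -> vec R -> vec R) (hlie : is_lie_bracket br)
  (eX eY : 'I_3 -> 'I_4 -> R) (x1 y1 x2 y2 rho : R) (t1 t2 th : 'I_4 -> R)
  (hAB : br (bas R iA) (bas R iB) = 2 *: bas R iC)
  (hCA : br (bas R iC) (bas R iA) = 2 *: bas R iB)
  (hBC : br (bas R iB) (bas R iC) = 2 *: bas R iA)
  (hTE : forall k, br (bas R iT) (su2 R k) = 0)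
  (hEX : forall k, br (su2 R k) (bas R iX) = vcomb (eX k))
  (hEY : forall k, br (su2 R k) (bas R iY) = vcomb (eY k))
  (hTX : br (bas R iT) (bas R iX) = x1 *: bas R iX + y1 *: bas R iY + vcomb t1)
  (hTY : br (bas R iT) (bas R iY) = x2 *: bas R iX + y2 *: bas R iY + vcomb t2)
  (hXY : br (bas R iX) (bas R iY) = rho *: bas R iX + vcomb th)
  (nabla : vec R -> vec R -> vec R) (hLC : is_levi_civita eps br nabla) :
  (conformal_fol eps nabla <-> x1 = y2 /\ eps iX * x2 + eps iY * y1 = 0) /\
  (conformal_fol eps nabla -> (semiriem_fol nabla <-> x1 = 0 /\ y2 = 0)).
Proof.
have eps_neq0 i : eps i != 0 by case: (heps i) => ->; rewrite ?oppr_eq0 oner_eq0.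
have conf := conformal_iff eps_neq0 hlie hEX hEY hTX hTY hLC.
split=> // /conf [_ hs].
rewrite (semiriem_iff eps_neq0 hlie hEX hEY hTX hTY hLC).
by split=> [[]|[]].
Qed.
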